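(* Let $L$ be a Lie algebra over a field $K$ of characteristic different from $2$ and $3$. If $L$ has a subalgebra of codimension $1$ which is not an ideal, then $L$ possesses a nonzero commutative $2$-cocycle.
   Context: A commutative $2$-cocycle on $L$ is a symmetric bilinear form $\varphi:L\times L\to K$ such that $\varphi([x,y],z)+\varphi([z,x],y)+\varphi([y,z],x)=0$ for all $x,y,z\in L$. *)

From mathcomp Require Import all_boot all_algebra.
Set Implicit Arguments. Unset Strict Implicit. Unset Printing Implicit Defensive.
Import GRing.Theory.
Local Open Scope ring_scope.

Definition lie_bracket (K : fieldType) (L : lmodType K) (br : L -> L -> L) : Prop :=
  [/\ (forall (a : K) (x y z : L), br (a *: x + y) z = a *: br x z + br y z),
      (forall (a : K) (x y z : L), br z (a *: x + y) = a *: br z x + br z y),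
      (forall x : L, br x x = 0) &
      (forall x y z : L, br x (br y z) + br y (br z x) + br z (br x y) = 0)].

Definition lie_subalgebra (K : fieldType) (L : lmodType K) (br : L -> L -> L)
  (S : {pred L}) : Prop :=
  [/\ 0 \in S,
      (forall (a : K) (x y : L), x \in S -> y \in S -> a *: x + y \in S) &
      (forall x y : L, x \in S -> y \in S -> br x y \in S)].

Definition codim1 (K : fieldType) (L : lmodType K) (S : {pred L}) : Prop :=
  exists2 v : L, v \notin S &
    forall x : L, exists (a : K) (s : L), s \in S /\ x = s + a *: v.

Definition lie_ideal (K : fieldType) (L : lmodType K) (br : L -> L -> L)
  (S : {pred L}) : Prop :=
  forall x s : L, s \in S -> br x s \in S.

Definition comm_2cocycle (K : fieldType) (L : lmodType K) (br : L -> L -> L)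
  (phi : L -> L -> K) : Prop :=
  [/\ (forall (a : K) (x y z : L), phi (a *: x + y) z = a * phi x z + phi y z),
      (forall (a : K) (x y z : L), phi z (a *: x + y) = a * phi z x + phi z y),
      (forall x y : L, phi x y = phi y x) &
      (forall x y z : L, phi (br x y) z + phi (br z x) y + phi (br y z) x = 0)].

(** The codimension-one subalgebra S is the kernel of a linear form f with
    f v = 1.  Since S is closed under the bracket, f [x, y] only sees the
    v-components of x and y, which gives
      f [x, y] = f y * f [x, v] - f x * f [y, v];
    with this identity the cyclic sum defining the cocycle condition for the
    symmetric form f x * f y cancels termwise.  The cocycle is nonzero at
    (v, v). *)

From Stdlib Require Import ClassicalEpsilon.
From mathcomp Require Import all_boot all_algebra.
From mathcomp Require Import ring.
Set Implicit Arguments. Unset Strict Implicit. Unset Printing Implicit Defensive.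
Import GRing.Theory.
Local Open Scope ring_scope.

Definition linear_form (K : fieldType) (L : lmodType K) (f : L -> K) : Prop :=
  forall (a : K) (x y : L), f (a *: x + y) = a * f x + f y.

Section LinearForm.
Variables (K : fieldType) (L : lmodType K) (f : L -> K).
Hypothesis flin : linear_form f.

Lemma linear_form0 : f 0 = 0.
Proof.
have := flin 1 0 0; rewrite scale1r addr0 mul1r => /eqP.
by rewrite -subr_eq0 opprD addrA subrr add0r oppr_eq0 => /eqP.
Qed.

Lemma linear_formZ (a : K) (x : L) : f (a *: x) = a * f x.
Proof. by rewrite -[a *: x]addr0 flin linear_form0 addr0. Qed.

Lemma linear_formN (x : L) : f (- x) = - f x.
Proof. by rewrite -scaleN1r linear_formZ mulN1r. Qed.

End LinearForm.

Section Subspace.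
Variables (K : fieldType) (L : lmodType K) (S : {pred L}).
Hypotheses (S0 : 0 \in S)
  (Slin : forall (a : K) (x y : L), x \in S -> y \in S -> a *: x + y \in S).

Lemma subspaceZ (a : K) (x : L) : x \in S -> a *: x \in S.
Proof. by move=> xS; rewrite -[_ *: _]addr0 Slin. Qed.

Lemma subspaceD (x y : L) : x \in S -> y \in S -> x + y \in S.
Proof. by move=> xS yS; rewrite -[x]scale1r Slin. Qed.

Lemma subspaceB (x y : L) : x \in S -> y \in S -> x - y \in S.
Proof. by move=> xS yS; rewrite subspaceD // -scaleN1r subspaceZ. Qed.

Lemma codim1_coord_unique (v : L) (a b : K) (s t : L) :
  v \notin S -> s \in S -> t \in S -> s + a *: v = t + b *: v -> a = b.
Proof.
move=> vS sS tS e; have [//|neq_ab] := eqVneq a b; case/negP: vS.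
have -> : v = (b - a)^-1 *: (s - t).
  have -> : s - t = (b - a) *: v.
    by rewrite scalerBl -[s](addrK (a *: v)) e addrAC [t + _]addrC addrK.
  by rewrite scalerA mulVf ?scale1r // subr_eq0 eq_sym.
by rewrite subspaceZ // subspaceB.
Qed.

(* The coordinate along v is extracted by choice from the codimension-one
   decomposition; uniqueness of the decomposition makes it linear. *)
Lemma codim1_linear_form (v : L) :
  v \notin S -> (forall x : L, exists (a : K) (s : L), s \in S /\ x = s + a *: v) ->
  exists f : L -> K, [/\ linear_form f, f v = 1,
    (forall s, s \in S -> f s = 0) & (forall x, x - f x *: v \in S)].
Proof.
move=> vS dec.
have coord x : {a : K | exists s, s \in S /\ x = s + a *: v}.
  exact: constructive_indefinite_description.
pose f x := sval (coord x).
have f_coord x s a : s \in S -> x = s + a *: v -> f x = a.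
  rewrite /f; case: (coord x) => b [t [tS ex]] /= sS; rewrite ex => e.
  exact: codim1_coord_unique vS tS sS e.
have proj x : x - f x *: v \in S.
  by rewrite /f; case: (coord x) => a [s [sS e]] /=; rewrite {1}e addrK.
exists f; split=> [c x y | | s sS | //].
- apply: (f_coord _ (c *: (x - f x *: v) + (y - f y *: v))); first exact: Slin.
  rewrite -{1}(subrK (f x *: v) x) -{1}(subrK (f y *: v) y).
  by rewrite scalerDr scalerA scalerDl addrACA.
- by apply: (f_coord _ 0) => //; rewrite add0r scale1r.
- by apply: (f_coord _ s) => //; rewrite scale0r addr0.
Qed.

End Subspace.

Section LieBracket.
Variables (K : fieldType) (L : lmodType K) (br : L -> L -> L).
Hypothesis HL : lie_bracket br.

Lemma lie_bracket_anticomm (x y : L) : br y x = - br x y.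
Proof.
case: HL => brl brr brxx _.
have brD x1 x2 z : br (x1 + x2) z = br x1 z + br x2 z.
  by rewrite -[x1]scale1r brl !scale1r.
have brDr z x1 x2 : br z (x1 + x2) = br z x1 + br z x2.
  by rewrite -[x1]scale1r brr !scale1r.
apply/eqP; rewrite -addr_eq0 addrC; apply/eqP.
by have := brxx (x + y); rewrite brD !brDr !brxx add0r addr0.
Qed.

Variables (S : {pred L}) (f : L -> K) (v : L).
Hypotheses (HS : lie_subalgebra br S) (flin : linear_form f)
  (fS : forall s, s \in S -> f s = 0) (proj : forall x, x - f x *: v \in S).

Lemma form_bracket_kernel_subalgebra (x y : L) :
  f (br x y) = f y * f (br x v) - f x * f (br y v).
Proof.
case: HL => brl brr brxx _; case: HS => _ _ Sbr.
set s := x - f x *: v; set t := y - f y *: v.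
have ex : x = f x *: v + s by rewrite addrC subrK.
have ey : y = f y *: v + t by rewrite addrC subrK.
have fxv : f (br x v) = f (br s v) by rewrite {1}ex brl brxx scaler0 add0r.
have fyv : f (br y v) = f (br t v) by rewrite {1}ey brl brxx scaler0 add0r.
rewrite fxv fyv {1}ex {1}ey brl !brr brxx scaler0 add0r.
rewrite !flin (fS (Sbr _ _ (proj x) (proj y))) addr0 lie_bracket_anticomm.
by rewrite (linear_formN flin); ring.
Qed.

End LieBracket.

Lemma rank_one_comm_2cocycle (K : fieldType) (L : lmodType K)
    (br : L -> L -> L) (f g : L -> K) :
  linear_form f -> (forall x y, f (br x y) = f y * g x - f x * g y) ->
  comm_2cocycle br (fun x y => f x * f y).
Proof.
move=> flin fbr; split=> [a x y z | a x y z | x y | x y z].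
- by rewrite flin; ring.
- by rewrite flin; ring.
- exact: mulrC.
- by rewrite !fbr; ring.
Qed.

Theorem lemma2p2 (K : fieldType) (L : lmodType K) (br : L -> L -> L)
  (HL : lie_bracket br)
  (h2 : (2%N \notin [pchar K])) (h3 : (3%N \notin [pchar K]))
  (S : {pred L}) (HS : lie_subalgebra br S) (Hcod : codim1 S)
  (Hni : ~ lie_ideal br S) :
  exists phi : L -> L -> K,
    comm_2cocycle br phi /\ exists x y : L, phi x y != 0.
Proof.
have [S0 Slin _] := HS.
have [v vS dec] := Hcod.
have [f [flin fv fS proj]] := codim1_linear_form S0 Slin vS dec.
exists (fun x y => f x * f y); split.
- exact: rank_one_comm_2cocycle flin
    (form_bracket_kernel_subalgebra HL HS flin fS proj).
- by exists v, v; rewrite fv mulr1 oner_neq0.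
Qed.
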